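(* Let $G$ be a finite graph with maximum degree $\Delta$ and average degree $d\geq \Delta^{3/4}$. Then $G$ contains a $C_4$-free subgraph with average degree at least $d\cdot \Delta^{-3/4}/4$.
   Context: Average degree of $G$ is $2e(G)/|V(G)|$. A graph is $C_4$-free if it contains no $4$-cycle as a subgraph. *)

From mathcomp Require Import all_boot all_order all_algebra.
From mathcomp Require Import reals exp.
Set Implicit Arguments. Unset Strict Implicit. Unset Printing Implicit Defensive.
Import Order.TTheory GRing.Theory Num.Theory.

(* A finite simple graph is a symmetric irreflexive relation e on a finType T. *)

Definition deg (T : finType) (e : rel T) (v : T) : nat := #|[set u | e v u]|.

Definition maxdeg (T : finType) (e : rel T) : nat := \max_(v : T) deg e v.

(* number of ordered adjacent pairs inside A, i.e. 2 * (number of edges of e inside A) *)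
Definition two_edges (T : finType) (A : {set T}) (e : rel T) : nat :=
  #|[set p : T * T | [&& p.1 \in A, p.2 \in A & e p.1 p.2]]|.

Definition avg_deg (R : realType) (T : finType) (A : {set T}) (e : rel T) : R :=
  ((two_edges A e)%:R / (#|A|)%:R)%R.

Definition is_subgraph (T : finType) (e : rel T) (A : {set T}) (e' : rel T) : Prop :=
  symmetric e' /\ (forall x y, e' x y -> [&& e x y, x \in A & y \in A]).

Definition C4_free (T : finType) (e : rel T) : Prop :=
  forall a b c d : T, uniq [:: a; b; c; d] ->
    ~~ [&& e a b, e b c, e c d & e d a].

From mathcomp Require Import all_boot all_order all_algebra.
From mathcomp Require Import reals exp.
From mathcomp Require Import zify ring.
From Stdlib Require Import Classical.
Import Order.TTheory GRing.Theory Num.Theory.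
Set Implicit Arguments. Unset Strict Implicit.

(* Fix k and let F be a maximal C4-free subgraph of G of maximum degree at most
   k, where an edge uv of G may only be added when u and v have degree < k in F
   and F has no walk of length 3 from u to v.  By maximality every edge of G has
   an endpoint of F-degree k or closes such a walk.  There are at most 2e(F)/k
   vertices of F-degree k, each on at most Delta edges, and at most 2e(F) k^2
   walks of length 3 in F, so k 2e(G) <= 2e(F) (2 Delta + k^3).  For
   k = floor(Delta^(1/3)) one has 2 Delta + k^3 <= 4 k Delta^(3/4). *)

Section DegreeCounting.
Variables (T : finType) (r : rel T).

Lemma deg_sum x : deg r x = \sum_y (r x y : nat).
Proof.
by rewrite /deg -sum1dep_card big_mkcond; apply: eq_bigr => y _; case: (r x y).
Qed.

Lemma two_edgesT : two_edges [set: T] r = \sum_x deg r x.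
Proof.
rewrite /two_edges -sum1dep_card big_mkcond (eq_bigr _ (fun x _ => deg_sum x)).
by rewrite pair_bigA; apply: eq_bigr => -[x y] _; rewrite !inE; case: (r x y).
Qed.

Lemma deg_le_maxdeg x : deg r x <= maxdeg r.
Proof. exact: leq_bigmax. Qed.

Lemma mul_card_deg_ge k : k * #|[set x | k <= deg r x]| <= \sum_x deg r x.
Proof.
rewrite -sum1dep_card big_distrr /= [X in _ <= X](bigID (fun x => k <= deg r x)) /=.
by apply: leq_trans _ (leq_addr _ _); apply: leq_sum => x; rewrite muln1.
Qed.

Lemma sum_deg_in_le (S : {set T}) :
  \sum_u \sum_v r u v * (u \in S) <= #|S| * maxdeg r.
Proof.
rewrite -sum1_card big_distrl [X in _ <= X]big_mkcond /=.
apply: leq_sum => u _; rewrite -big_distrl /= -deg_sum.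
case: (u \in S); rewrite /= ?muln1 ?muln0 ?mul1n //; exact: deg_le_maxdeg.
Qed.

Definition walks3 (u v : T) : nat := \sum_a \sum_b r u a * r a b * r b v.

Lemma sum_walks3 : symmetric r ->
  \sum_u \sum_v walks3 u v = \sum_a \sum_b deg r a * r a b * deg r b.
Proof.
move=> r_sym.
rewrite (eq_bigr (fun u => \sum_a \sum_b r u a * r a b * deg r b)) => [|u _].
  rewrite exchange_big; apply: eq_bigr => a _; rewrite exchange_big.
  apply: eq_bigr => b _; rewrite -!big_distrl /= [deg r a]deg_sum.
  by congr (_ * _ * _); apply: eq_bigr => u _; rewrite r_sym.
rewrite /walks3 exchange_big; apply: eq_bigr => a _; rewrite exchange_big.
by apply: eq_bigr => b _; rewrite deg_sum big_distrr.
Qed.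

Lemma sum_walks3_le : symmetric r ->
  \sum_u \sum_v walks3 u v <= (\sum_x deg r x) * maxdeg r ^ 2.
Proof.
move=> r_sym; rewrite sum_walks3 // big_distrl /=; apply: leq_sum => a _.
rewrite [in X in _ <= X]deg_sum big_distrl /=; apply: leq_sum => b _.
rewrite mulnC; case: (r a b); rewrite /= ?mul1n ?mul0n ?muln0 ?muln1 // expnS expn1.
by apply: leq_mul; apply: deg_le_maxdeg.
Qed.

End DegreeCounting.

Lemma walks3_gt0 (T : finType) (r : rel T) u a b v :
  r u a -> r a b -> r b v -> 0 < walks3 r u v.
Proof.
move=> rua rab rbv; rewrite /walks3 (bigD1 a) //= (bigD1 b) //= rua rab rbv.
by rewrite -addnA leq_addr.
Qed.

(* Subgraphs are handled as sets of ordered adjacent pairs, so that maximal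
   ones exist in the finite type {set T * T}. *)
Definition rel_of_set (T : finType) (F : {set T * T}) : rel T :=
  fun x y => (x, y) \in F.

Lemma C4_free_setU2 (T : finType) (F : {set T * T}) u v :
  symmetric (rel_of_set F) -> C4_free (rel_of_set F) ->
  walks3 (rel_of_set F) u v = 0 ->
  C4_free (rel_of_set (F :|: [set (u, v); (v, u)])).
Proof.
set r := rel_of_set F; set r' := rel_of_set _ => r_sym r_C4 no_walk.
have r'E x y : r' x y = [|| r x y, (x == u) && (y == v) | (x == v) && (y == u)].
  by rewrite /r' /rel_of_set !inE !xpair_eqE.
have r'_old x y : u != x -> v != x -> r' x y = r x y /\ r' y x = r y x.
  by move=> /negbTE ux /negbTE vx; rewrite !r'E !(eq_sym x) ux vx !andbF !orbF.
have old_first x y z w : uniq [:: x; y; z; w] -> cycle r' [:: x; y; z; w] -> r x y.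
  rewrite /= !inE !negb_or => /and4P[/and3P[xy xz xw] /andP[yz yw] _ _].
  rewrite r'E => /and5P[].
  case/or3P=> [// | /andP[/eqP xu /eqP yv] | /andP[/eqP xv /eqP yu]] r'yz r'zw r'wx _.
  - rewrite xu yv in xz yz xw yw r'yz r'wx.
    rewrite (r'_old _ _ xz yz).2 in r'yz; rewrite (r'_old _ _ xz yz).1 in r'zw.
    rewrite (r'_old _ _ xw yw).1 in r'wx.
    suff : 0 < walks3 r u v by rewrite no_walk.
    by apply: (walks3_gt0 (a := w) (b := z)); rewrite r_sym.
  - rewrite xv yu in xz yz xw yw r'yz r'wx.
    rewrite (r'_old _ _ yz xz).2 in r'yz; rewrite (r'_old _ _ yz xz).1 in r'zw.
    rewrite (r'_old _ _ yw xw).1 in r'wx.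
    suff : 0 < walks3 r u v by rewrite no_walk.
    exact: walks3_gt0 r'yz r'zw r'wx.
move=> a b c d abcd; apply/negP => cyc_abcd.
have {cyc_abcd} cyc : cycle r' [:: a; b; c; d] by rewrite /= andbT.
have /negP := r_C4 a b c d abcd; apply; apply/and4P; split.
- exact: (old_first a b c d abcd cyc).
- apply: (old_first b c d a); first by rewrite (rot_uniq 1 [:: a; b; c; d]).
  by rewrite (rot_cycle 1 r' [:: a; b; c; d]).
- apply: (old_first c d a b); first by rewrite (rot_uniq 2 [:: a; b; c; d]).
  by rewrite (rot_cycle 2 r' [:: a; b; c; d]).
- apply: (old_first d a b c); first by rewrite (rot_uniq 3 [:: a; b; c; d]).
  by rewrite (rot_cycle 3 r' [:: a; b; c; d]).
Qed.

Lemma card_set_andb_eq1 (T : finType) (b : bool) (v : T) :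
  #|[set y | b && (y == v)]| = b.
Proof.
case: b => /=; [rewrite -(cards1 v) | rewrite -(cards0 T)];
  by apply: eq_card => y; rewrite !inE.
Qed.

Lemma deg_setU2 (T : finType) (F : {set T * T}) u v x :
  deg (rel_of_set (F :|: [set (u, v); (v, u)])) x
    <= deg (rel_of_set F) x + (x == u) + (x == v).
Proof.
rewrite /deg -(card_set_andb_eq1 (x == u) v) -(card_set_andb_eq1 (x == v) u).
have -> : [set y | rel_of_set (F :|: [set (u, v); (v, u)]) x y] =
    [set y | rel_of_set F x y] :|: [set y | (x == u) && (y == v)]
                               :|: [set y | (x == v) && (y == u)].
  by apply/setP => y; rewrite !inE /rel_of_set !inE !xpair_eqE orbA.
apply: leq_trans (leq_card_setU _ _).1 _; rewrite leq_add2r.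
exact: (leq_card_setU _ _).1.
Qed.

Lemma exists_maximal_set (X : finType) (P : {set X} -> Prop) (A : {set X}) :
  P A -> exists2 F, P F & forall G : {set X}, F \proper G -> ~ P G.
Proof.
move: {2}#|~: A| (leqnn #|~: A|) => n.
elim: n A => [|n IHn] A An PA;
  (have [[G AG PG]|noG] := classic (exists2 G : {set X}, A \proper G & P G);
   last by exists A => // G AG PG; apply: noG; exists G);
  have := proper_card (_ : ~: G \proper ~: A); rewrite properC => /(_ AG) GA.
- by move: GA; rewrite ltnNge (leq_trans An).
- by apply: (IHn G) => //; rewrite -ltnS (leq_trans GA).
Qed.

Section MaximalBoundedC4Free.
Variables (T : finType) (e : rel T) (k : nat).
Hypotheses (e_sym : symmetric e) (e_irr : irreflexive e).

Definition bounded_C4_free (F : {set T * T}) : Prop :=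
  [/\ symmetric (rel_of_set F), subrel (rel_of_set F) e, C4_free (rel_of_set F)
    & forall x, deg (rel_of_set F) x <= k].

Definition maximal_bounded_C4_free (F : {set T * T}) : Prop :=
  bounded_C4_free F /\ forall G : {set T * T}, F \proper G -> ~ bounded_C4_free G.

Lemma bounded_C4_free0 : bounded_C4_free set0.
Proof.
split=> [x y|x y|a b c d _|x]; rewrite /rel_of_set ?inE //.
by rewrite /deg (_ : [set y | _] = set0) ?cards0 //; apply/setP => y; rewrite !inE.
Qed.

Lemma bounded_C4_free_setU2 F u v :
  bounded_C4_free F -> e u v -> deg (rel_of_set F) u < k -> deg (rel_of_set F) v < k ->
  walks3 (rel_of_set F) u v = 0 -> bounded_C4_free (F :|: [set (u, v); (v, u)]).
Proof.
move=> [F_sym F_e F_C4 F_deg] euv du dv no_walk.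
have uv : (u == v) = false by apply: contraTF euv => /eqP->; rewrite e_irr.
split.
- move=> x y; have := F_sym x y; rewrite /rel_of_set !inE !xpair_eqE => ->.
  by congr (_ || _); rewrite orbC [(y == u) && _]andbC [(y == v) && _]andbC.
- move=> x y; rewrite /rel_of_set !inE !xpair_eqE.
  case/or3P=> [/F_e // | /andP[/eqP-> /eqP->] // | /andP[/eqP-> /eqP->]].
  by rewrite e_sym.
- exact: C4_free_setU2.
- move=> x; apply: leq_trans (deg_setU2 F u v x) _.
  have [->|xu] := eqVneq x u; first by rewrite uv addn0 addn1.
  have [->|xv] := eqVneq x v; first by rewrite addn0 addn1.
  by rewrite addn0 addn0 F_deg.
Qed.

Lemma maximal_bounded_C4_free_cover F u v :
  maximal_bounded_C4_free F -> e u v ->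
  [|| k <= deg (rel_of_set F) u, k <= deg (rel_of_set F) v
    | 0 < walks3 (rel_of_set F) u v].
Proof.
move=> [bF maxF] euv; apply/negPn/negP; rewrite !negb_or -!ltnNge ltnS leqn0.
case/and3P=> du dv /eqP no_walk.
apply: (maxF (F :|: [set (u, v); (v, u)])); last exact: bounded_C4_free_setU2.
rewrite properUl //; apply/subsetPn; exists (u, v); first by rewrite !inE eqxx.
(* (u, v) \in F would give the walk u v u v. *)
apply/negP => Fuv; suff : 0 < walks3 (rel_of_set F) u v by rewrite no_walk.
by case: bF => F_sym _ _ _; apply: (walks3_gt0 (a := v) (b := u)); rewrite // F_sym.
Qed.

Lemma sum_deg_maximal_bounded_C4_free F :
  maximal_bounded_C4_free F ->
  k * \sum_x deg e x <= (\sum_x deg (rel_of_set F) x) * (2 * maxdeg e + k ^ 3).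
Proof.
move=> mF; have [[F_sym _ _ F_deg] _] := mF.
set r := rel_of_set F; set S := [set x | k <= deg r x].
have cover u v : e u v <= e u v * ((u \in S) + (v \in S)) + walks3 r u v.
  case euv: (e u v) => //; rewrite mul1n !inE.
  case/or3P: (maximal_bounded_C4_free_cover mF euv) => [-> | -> | w_pos].
  - by rewrite /= !addSn.
  - by rewrite /= addnS addSn.
  - by rewrite addnC ltn_addr.
have sum_e : \sum_x deg e x <= 2 * (#|S| * maxdeg e) + \sum_u \sum_v walks3 r u v.
  have sym_half : \sum_u \sum_v e u v * (v \in S) = \sum_u \sum_v e u v * (u \in S).
    rewrite exchange_big; apply: eq_bigr => u _.
    by apply: eq_bigr => v _; rewrite e_sym.
  rewrite (eq_bigr _ (fun u _ => deg_sum e u)).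
  apply: (@leq_trans (\sum_u \sum_v (e u v * ((u \in S) + (v \in S)) + walks3 r u v))).
    by apply: leq_sum => u _; apply: leq_sum => v _; apply: cover.
  under eq_bigr => u _ do rewrite big_split /=.
  rewrite big_split /= leq_add2r.
  under eq_bigr => u _ do under eq_bigr => v _ do rewrite mulnDr.
  under eq_bigr => u _ do rewrite big_split /=.
  rewrite big_split /= sym_half addnn -mul2n.
  by rewrite leq_mul2l sum_deg_in_le orbT.
have card_S := mul_card_deg_ge r k.
have sum_w : \sum_u \sum_v walks3 r u v <= (\sum_x deg r x) * k ^ 2.
  apply: leq_trans (sum_walks3_le F_sym) _; rewrite leq_mul2l leq_exp2r //.
  by apply/orP; right; apply/bigmax_leqP => x _; apply: F_deg.
set EF := \sum_x deg r x in card_S sum_w *; set W := \sum_u \sum_v _ in sum_e sum_w.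
have -> : EF * (2 * maxdeg e + k ^ 3) = 2 * (EF * maxdeg e) + k * (EF * k ^ 2) by ring.
apply: leq_trans (leq_mul (leqnn k) sum_e) _; rewrite mulnDr mulnCA.
apply: leq_add; first by rewrite leq_mul2l mulnA leq_mul2r card_S !orbT.
by rewrite leq_mul2l sum_w orbT.
Qed.

Lemma exists_maximal_bounded_C4_free : exists F, maximal_bounded_C4_free F.
Proof. by have [F ? ?] := exists_maximal_set bounded_C4_free0; exists F. Qed.

End MaximalBoundedC4Free.

Lemma exists_floor_cbrt D : exists k, k ^ 3 <= D < k.+1 ^ 3.
Proof.
have ex : exists k, k ^ 3 <= D by exists 0.
have ub k : k ^ 3 <= D -> k <= D by nia.
case: (ex_maxnP ex ub) => k kD kmax; exists k; rewrite kD ltnNge /=.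
by apply/negP => /kmax; rewrite ltnn.
Qed.

Lemma floor_cbrt_balance k D : 0 < D -> k ^ 3 <= D < k.+1 ^ 3 ->
  (2 * D + k ^ 3) ^ 4 <= (4 * k) ^ 4 * D ^ 3.
Proof.
move=> D_gt0 /andP[kD Dk]; rewrite expnMn.
have [k_le1 | k_ge2] := leqP k 1.
  by case: k k_le1 kD Dk => [|[|//]] _ kD Dk; nia.
have three : 2 * D + k ^ 3 <= 3 * D by lia.
have D_le : 81 * D <= 4 ^ 4 * k ^ 4 by nia.
apply: leq_trans (_ : (3 * D) ^ 4 <= _); first by rewrite leq_exp2r.
have -> : (3 * D) ^ 4 = 81 * D * D ^ 3 by ring.
by rewrite leq_mul2r D_le orbT.
Qed.

Local Open Scope ring_scope.

Lemma ler_nat_powR34 (R : realType) (a b D : nat) :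
  (a ^ 4 <= b ^ 4 * D ^ 3)%N -> (a%:R : R) <= b%:R * D%:R `^ (3 / 4).
Proof.
move=> ab; have p_ge0 : (0 : R) <= D%:R `^ (3 / 4) by apply: powR_ge0.
have p4 : (D%:R `^ (3 / 4)) ^+ 4 = (D%:R : R) ^+ 3.
  rewrite -powR_mulrn // -powRrM -powR_mulrn //.
  by rewrite divfK // pnatr_eq0.
rewrite -(@ler_pXn2r _ 4) ?nnegrE ?mulr_ge0 //.
by rewrite exprMn p4 -!natrX -natrM ler_nat.
Qed.

Lemma ler_powRN34_floor_cbrt (R : realType) (k M N D : nat) :
  (k ^ 3 <= D < k.+1 ^ 3)%N -> (k * M <= N * (2 * D + k ^ 3))%N ->
  M%:R * D%:R `^ (- (3 / 4)) / 4 <= (N%:R : R).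
Proof.
move=> k_cbrt kM; have [D0 | D_gt0] := posnP D.
  by rewrite D0 powR0 ?mulr0 ?mul0r ?ler0n // oppr_eq0 mulf_neq0 ?invr_eq0 ?pnatr_eq0.
have k_gt0 : (0 < k)%N.
  by rewrite lt0n; apply: contraTneq k_cbrt => ->; rewrite exp1n ltnNge D_gt0 andbF.
set p := (D%:R : R) `^ (3 / 4).
have p_gt0 : 0 < p by apply: powR_gt0; rewrite ltr0n.
have bal : (2 * D + k ^ 3)%N%:R <= (4 * k)%N%:R * p.
  exact/ler_nat_powR34/floor_cbrt_balance.
rewrite powRN -/p ler_pdivrMr // ler_pdivrMr // -(@ler_pM2l _ k%:R) ?ltr0n //.
apply: le_trans (_ : N%:R * (2 * D + k ^ 3)%N%:R <= _).
  by rewrite -!natrM ler_nat.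
have -> : k%:R * (N%:R * 4 * p) = N%:R * ((4 * k)%:R * p) by rewrite natrM; ring.
by apply: ler_wpM2l; rewrite ?ler0n.
Qed.

Theorem lemma10 (R : realType) (T : finType) (e : rel T) :
  symmetric e -> irreflexive e -> (0 < #|T|)%N ->
  ((maxdeg e)%:R : R) `^ (3 / 4) <= avg_deg R [set: T] e ->
  exists (A : {set T}) (e' : rel T),
    [/\ A != set0, is_subgraph e A e', C4_free e' &
        avg_deg R [set: T] e * ((maxdeg e)%:R : R) `^ (- (3 / 4)) / 4
          <= avg_deg R A e'].
Proof.
(* The bound holds without the hypothesis d >= Delta^(3/4), which only makes it
   at least 1/4. *)
move=> e_sym e_irr T_gt0 _.
have [k k_cbrt] := exists_floor_cbrt (maxdeg e).
have [F mF] := exists_maximal_bounded_C4_free e k.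
have [[F_sym F_e F_C4 _] _] := mF.
exists [set: T], (rel_of_set F); split => //.
- by rewrite -card_gt0 cardsT.
- by split => // x y /F_e exy; rewrite !inE exy.
rewrite /avg_deg !two_edgesT cardsT.
have -> (a b : R) : a / #|T|%:R * b / 4 = a * b / 4 / #|T|%:R by ring.
rewrite ler_pM2r ?invr_gt0 ?ltr0n //.
exact: ler_powRN34_floor_cbrt k_cbrt (sum_deg_maximal_bounded_C4_free e_sym e_irr mF).
Qed.
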